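(* Let $d$ be a premetric with open balls on a topological space $X$, and let $A\subset X$ be non-empty. Then the following are equivalent: (1) $\overline d_A=\overline d^\circ_A$; (2) $\overline d_A$ is continuous; (3) $\overline d^\circ_A$ is continuous. Moreover, the following two conditions are equivalent and imply (1)–(3): (4) $d_A$ is continuous; (5) $\overline d_A=\overline d^\circ_A=d_A$.
   Context: A premetric on $X$ is $d:X\times X\to[0,\infty)$ with $d(x,x)=0$. $B_d(x,\varepsilon)=\{y:d(x,y)<\varepsilon\}$, $B_d(A,\varepsilon)=\bigcup_{a\in A}B_d(a,\varepsilon)$; $d$ has open balls if every $B_d(x,\varepsilon)$ is open in $X$. For non-empty $A\subset X$ and $x\in X$: $d_A(x)=\inf\{\varepsilon>0:x\in B_d(A,\varepsilon)\}$, $\overline d_A(x)=\inf\{\varepsilon>0:x\in\overline{B_d(A,\varepsilon)}\}$, $\overline d^\circ_A(x)=\inf\{\varepsilon>0:x\in B_d(A,\varepsilon)\cup\mathrm{int}\,\overline{B_d(A,\varepsilon)}\}$. *)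

From HB Require Import structures.
From mathcomp Require Import all_boot all_order all_algebra.
From mathcomp Require Import all_classical all_reals all_analysis.
Set Implicit Arguments. Unset Strict Implicit. Unset Printing Implicit Defensive.
Import Order.TTheory GRing.Theory Num.Theory.
Local Open Scope classical_set_scope.
Local Open Scope ring_scope.

Definition premetric (R : realType) (X : Type) (d : X -> X -> R) : Prop :=
  (forall x y, 0 <= d x y) /\ (forall x, d x x = 0).

Definition pball (R : realType) (X : Type) (d : X -> X -> R) (x : X) (e : R)
  : set X := [set y | d x y < e].

Definition pballA (R : realType) (X : Type) (d : X -> X -> R) (A : set X) (e : R)
  : set X := \bigcup_(a in A) pball d a e.

Definition has_open_balls (R : realType) (X : topologicalType)
  (d : X -> X -> R) : Prop :=
  forall (x : X) (e : R), open (pball d x e).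

Definition distA (R : realType) (X : Type) (d : X -> X -> R) (A : set X)
  (x : X) : R := inf [set e : R | 0 < e /\ pballA d A e x].

Definition cdistA (R : realType) (X : topologicalType) (d : X -> X -> R)
  (A : set X) (x : X) : R :=
  inf [set e : R | 0 < e /\ closure (pballA d A e) x].

Definition cidistA (R : realType) (X : topologicalType) (d : X -> X -> R)
  (A : set X) (x : X) : R :=
  inf [set e : R | 0 < e /\
         (pballA d A e `|` interior (closure (pballA d A e))) x].

From HB Require Import structures.
From mathcomp Require Import all_boot all_order all_algebra.
From mathcomp Require Import all_classical all_reals all_analysis.
Import Order.TTheory GRing.Theory Num.Theory.
Import numFieldTopology.Exports numFieldNormedType.Exports.
Local Open Scope classical_set_scope.
Local Open Scope ring_scope.

(** All three distances are "first level" functions x |-> inf {e > 0 | x \in O e}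
    of an increasing family O: for the open family U e = B_d(A, e) this gives
    d_A, for closure \o U it gives bar d_A, and for U \cup int (closure U) it
    gives bar d^o_A, so that bar d_A <= bar d^o_A <= d_A.  Open families give
    upper semicontinuous functions, while bar d_A is lower semicontinuous and
    is the largest lower semicontinuous function bounded by e on each U e.
    So if bar d^o_A or d_A is continuous, hence lower semicontinuous, it
    collapses onto bar d_A; and if bar d_A is upper semicontinuous then every
    point where it is below r lies in int (closure (U r)), which forces
    bar d^o_A <= bar d_A. *)

Section Semicontinuity.
Context {R : realType} {X : topologicalType}.

Definition upper_semicont (f : X -> R) :=
  forall x r, f x < r -> \forall y \near x, f y < r.

Definition lower_semicont (f : X -> R) :=
  forall x r, r < f x -> \forall y \near x, r < f y.

Lemma continuous_upper_semicont {f} : continuous f -> upper_semicont f.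
Proof. by move=> fC x r; exact: cvgr_lt (fC x) r. Qed.

Lemma continuous_lower_semicont {f} : continuous f -> lower_semicont f.
Proof. by move=> fC x r; exact: cvgr_gt (fC x) r. Qed.

Lemma semicont_continuous {f} :
  upper_semicont f -> lower_semicont f -> continuous f.
Proof.
move=> fU fL x; apply/cvgrPdist_lt => eps eps_gt0.
have fxD : f x < f x + eps by rewrite ltrDl.
have fxB : f x - eps < f x by rewrite ltrBlDr ltrDl.
apply: filterS2 (fU x _ fxD) (fL x _ fxB) => y fy_lt fy_gt.
by rewrite ltr_distlC fy_gt fy_lt.
Qed.

End Semicontinuity.

Section LevelInf.
Context {R : realType} {X : topologicalType}.
Implicit Types (O P : R -> set X) (x : X) (e r : R).

Definition level_inf O x : R := inf [set e | 0 < e /\ O e x].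

Definition covering O := forall x, exists e, 0 < e /\ O e x.

Lemma level_inf_le {O x e} : 0 < e -> O e x -> level_inf O x <= e.
Proof.
move=> e_gt0 Oex; apply: ge_inf; last by split.
by exists 0 => y [/ltW].
Qed.

Lemma level_inf_ge0 {O} x : covering O -> 0 <= level_inf O x.
Proof. by move=> /(_ x) Ox; apply: lb_le_inf => // e [/ltW]. Qed.

Lemma le_level_inf O P x : covering O -> (forall e, O e `<=` P e) ->
  level_inf P x <= level_inf O x.
Proof.
move=> /(_ x) Ox OP; apply: lb_le_inf => // e [e_gt0 Oex].
exact: level_inf_le (OP _ _ Oex).
Qed.

Lemma upper_semicont_level_inf P : (forall e, open (P e)) -> covering P ->
  upper_semicont (level_inf P).
Proof.
move=> Popen Pcov x r /(inf_lt (Pcov x)) [e [e_gt0 Pex] er].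
apply: filterS (open_nbhs_nbhs (conj (Popen e) Pex)) => y Pey.
exact: le_lt_trans (level_inf_le e_gt0 Pey) er.
Qed.

Variable O : R -> set X.
Hypotheses (O_open : forall e, open (O e))
  (O_mono : forall e e', e <= e' -> O e `<=` O e') (O_cover : covering O).

Local Notation O_cl := (fun e => closure (O e)).
Local Notation O_int := (fun e => O e `|` interior (closure (O e))).

Lemma covering_closure : covering O_cl.
Proof.
by move=> x; have [e [e_gt0 Oex]] := O_cover x; exists e; split=> //; apply: subset_closure.
Qed.

Lemma covering_interior : covering O_int.
Proof. by move=> x; have [e [e_gt0 Oex]] := O_cover x; exists e; split=> //; left. Qed.

Lemma open_interior_family e : open (O_int e).
Proof. by apply: openU => //; exact: open_interior. Qed.

Lemma level_inf_closure_le_interior x : level_inf O_cl x <= level_inf O_int x.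
Proof.
apply: le_level_inf; first exact: covering_interior.
by move=> e y [/subset_closure|/nbhs_singleton].
Qed.

Lemma level_inf_interior_le x : level_inf O_int x <= level_inf O x.
Proof. by apply: le_level_inf => // e y Oey; left. Qed.

Lemma lower_semicont_level_inf_closure : lower_semicont (level_inf O_cl).
Proof.
move=> x r rx; have [r_lt0|r_ge0] := ltP r 0.
  by apply: filterE => y; apply: lt_le_trans r_lt0 (level_inf_ge0 _ covering_closure).
set s := (r + level_inf O_cl x) / 2; have [rs sx] := midf_lt rx.
have s_gt0 : 0 < s by apply: le_lt_trans rs.
have Csx : ~ closure (O s) x.
  by move=> /(level_inf_le (O := O_cl) s_gt0); rewrite leNgt sx.
have : nbhs x (~` closure (O s)).
  by apply: open_nbhs_nbhs; split => //; apply: closed_openC; exact: closed_closure.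
apply: filterS => y Csy; apply: lt_le_trans rs _.
apply: lb_le_inf; first exact: covering_closure.
(* an admissible level e < s would put y in closure (O e) `<=` closure (O s) *)
move=> e [_ Cey]; rewrite leNgt; apply/negP => es.
by apply: Csy; apply: (closureS (O_mono _ _ (ltW es))).
Qed.

Lemma le_level_inf_closure {g : X -> R} : lower_semicont g ->
  (forall e y, 0 < e -> O e y -> g y <= e) -> forall x, g x <= level_inf O_cl x.
Proof.
move=> gL gO x; rewrite leNgt; apply/negP => /(inf_lt (covering_closure x)).
move=> [e [e_gt0 Cex] eg]; have [y [Oey ey]] := Cex _ (gL x e eg).
by move: (gO e y e_gt0 Oey); rewrite leNgt ey.
Qed.

Lemma level_inf_interior_le_closure : upper_semicont (level_inf O_cl) ->
  forall x, level_inf O_int x <= level_inf O_cl x.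
Proof.
move=> clU x; rewrite leNgt; apply/negP => lt_cl_int.
set r := (level_inf O_cl x + level_inf O_int x) / 2.
have [cl_r r_int] := midf_lt lt_cl_int.
have r_gt0 : 0 < r := le_lt_trans (level_inf_ge0 _ covering_closure) cl_r.
have ICx : interior (closure (O r)) x.
  apply: filterS (clU x r cl_r) => y /(inf_lt (covering_closure y)).
  by move=> [e [_ Cey] er]; exact: closureS (O_mono _ _ (ltW er)) _ Cey.
by move: (level_inf_le (O := O_int) r_gt0 (or_intror ICx)); rewrite leNgt r_int.
Qed.

Lemma level_inf_interior_le_of e y : 0 < e -> O e y -> level_inf O_int y <= e.
Proof. by move=> e_gt0 Oey; apply: level_inf_le => //; left. Qed.

Lemma level_inf_closure_eq_interiorP :
  level_inf O_cl = level_inf O_int <-> continuous (level_inf O_cl).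
Proof.
split=> [cl_int|clC].
  apply: semicont_continuous lower_semicont_level_inf_closure.
  rewrite cl_int.
  exact: upper_semicont_level_inf open_interior_family covering_interior.
apply/funext => x; apply/le_anti; rewrite level_inf_closure_le_interior /=.
exact: level_inf_interior_le_closure (continuous_upper_semicont clC) x.
Qed.

Lemma continuous_level_inf_closure_interior :
  continuous (level_inf O_cl) <-> continuous (level_inf O_int).
Proof.
split=> [clC|intC].
  by rewrite -(proj2 level_inf_closure_eq_interiorP clC).
apply/level_inf_closure_eq_interiorP/funext => x.
apply/le_anti; rewrite level_inf_closure_le_interior /=.
apply: (le_level_inf_closure (continuous_lower_semicont intC)) => e y.
exact: level_inf_interior_le_of.
Qed.

Lemma continuous_level_infP : continuous (level_inf O) <->
  level_inf O_cl = level_inf O_int /\ level_inf O_int = level_inf O.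
Proof.
split=> [OC|[cl_int int_O]].
  have O_le_cl x : level_inf O x <= level_inf O_cl x.
    apply: (le_level_inf_closure (continuous_lower_semicont OC)) => e y.
    exact: level_inf_le.
  have cl_le_int := level_inf_closure_le_interior.
  have int_le_O := level_inf_interior_le.
  split; apply/funext => x; apply/le_anti/andP; split.
  - exact: cl_le_int.
  - exact: le_trans (int_le_O x) (O_le_cl x).
  - exact: int_le_O.
  - exact: le_trans (O_le_cl x) (cl_le_int x).
apply: semicont_continuous; first exact: upper_semicont_level_inf.
by rewrite -int_O -cl_int; exact: lower_semicont_level_inf_closure.
Qed.

End LevelInf.

Section Premetric.
Context {R : realType} {X : topologicalType} (d : X -> X -> R) (A : set X).

Lemma pballA_mono e e' : e <= e' -> pballA d A e `<=` pballA d A e'.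
Proof. by move=> ee' x [a Aa dax]; exists a => //; apply: lt_le_trans ee'. Qed.

Lemma open_pballA e : has_open_balls d -> open (pballA d A e).
Proof. by move=> dB; apply: bigcup_open => a _; apply: dB. Qed.

Lemma covering_pballA : premetric d -> A !=set0 -> covering (pballA d A).
Proof.
move=> [d_ge0 _] [a Aa] x; exists (d a x + 1); split.
  by apply: lt_le_trans ltr01 _; rewrite lerDr.
by exists a => //; rewrite /pball /= ltrDl.
Qed.

End Premetric.

Theorem proposition1p2 (R : realType) (X : topologicalType)
  (d : X -> X -> R) (A : set X) :
  premetric d -> has_open_balls d -> A !=set0 ->
  ((cdistA d A = cidistA d A <-> continuous (cdistA d A : X -> R)) /\
   (continuous (cdistA d A : X -> R) <-> continuous (cidistA d A : X -> R))) /\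
  ((continuous (distA d A : X -> R) <-> (cdistA d A = cidistA d A /\ cidistA d A = distA d A)) /\
   (continuous (distA d A : X -> R) ->
      [/\ cdistA d A = cidistA d A, continuous (cdistA d A : X -> R)
        & continuous (cidistA d A : X -> R)])).
Proof.
move=> dP dB A0.
have Uopen e := open_pballA d A e dB.
have Umono := pballA_mono d A.
have Ucov := covering_pballA d A dP A0.
have eq12 : cdistA d A = cidistA d A <-> continuous (cdistA d A) :=
  level_inf_closure_eq_interiorP (pballA d A) Uopen Umono Ucov.
have cont12 : continuous (cdistA d A) <-> continuous (cidistA d A) :=
  continuous_level_inf_closure_interior (pballA d A) Uopen Umono Ucov.
have cont3 : continuous (distA d A) <->
    cdistA d A = cidistA d A /\ cidistA d A = distA d A :=
  continuous_level_infP (pballA d A) Uopen Umono Ucov.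
do 2 split=> //; move=> /cont3 [/eq12 clC _].
by split=> //; [apply/eq12 | apply/cont12].
Qed.
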